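(* Let $M$ be a complete pointed metric space and $Y$ an infinite-dimensional real Banach space. Then there exists a complete pointed metric space $M'$ such that (i) $\mathrm{A}(M',Y)\subsetneqq\mathrm{Lip}_0(M',Y)$; (ii) $M'\setminus M$ is countable; (iii) $M\subseteq M'$ and the metric of $M'$ restricted to $M$ is the metric of $M$.
   Context: Throughout, metric spaces are complete and pointed, with base point $0$. $\mathrm{Lip}_0(M,Y)$ is the Banach space of Lipschitz maps $f:M\to Y$ with $f(0)=0$, normed by $\|f\|=\sup_{p\neq q}\|f(p)-f(q)\|/d(p,q)$. A map $f$ attains its norm toward $y\in Y$ if there is a sequence $(p_n,q_n)$ in $M\times M$ with $p_n\neq q_n$ such that $[f(p_n)-f(q_n)]/d(p_n,q_n)\to y$ and $\|y\|=\|f\|$; $\mathrm{A}(M,Y)$ is the set of $f$ attaining their norm toward some vector. *)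

From HB Require Import structures.
From mathcomp Require Import all_boot all_order all_algebra.
From mathcomp Require Import all_classical all_reals all_analysis.
Set Implicit Arguments. Unset Strict Implicit. Unset Printing Implicit Defensive.
Import Order.TTheory GRing.Theory Num.Theory.
Import numFieldNormedType.Exports.
Local Open Scope classical_set_scope.
Local Open Scope ring_scope.

Section Defs.
Variable R : realType.

Definition is_metric (T : Type) (d : T -> T -> R) : Prop :=
  (forall x y, 0 <= d x y) /\ (forall x y, d x y = 0 <-> x = y) /\
  (forall x y, d x y = d y x) /\ (forall x y z, d x z <= d x y + d y z).

Definition complete_metric (T : Type) (d : T -> T -> R) : Prop :=
  forall u : nat -> T,
    (forall e, 0 < e -> exists N, forall m n, (N <= m)%N -> (N <= n)%N -> d (u m) (u n) < e) ->
    exists x, forall e, 0 < e -> exists N, forall n, (N <= n)%N -> d (u n) x < e.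

Definition infinite_dimensional (Y : normedModType R) : Prop :=
  forall s : seq Y, exists y : Y,
    forall c : nat -> R, y <> \sum_(i < size s) c i *: s`_i.

Variables (T : Type) (d : T -> T -> R) (x0 : T) (Y : normedModType R).

Definition lip_ratios (f : T -> Y) : set R :=
  [set r | exists p q, p <> q /\ r = `|f p - f q| / d p q].

Definition Lip0 : set (T -> Y) :=
  [set f | f x0 = 0 /\ has_ubound (lip_ratios f)].

Definition lipnorm (f : T -> Y) : R := sup (lip_ratios f).

Definition attains_norm_toward (f : T -> Y) (y : Y) : Prop :=
  exists p q : nat -> T, (forall n, p n <> q n) /\
    ((fun n => (d (p n) (q n))^-1 *: (f (p n) - f (q n))) @ \oo --> y) /\
    `|y| = lipnorm f.

Definition NA : set (T -> Y) :=
  [set f | Lip0 f /\ exists y, attains_norm_toward f y].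

End Defs.

From HB Require Import structures.
From mathcomp Require Import all_boot all_order all_algebra.
From mathcomp Require Import all_classical all_reals all_analysis.
From mathcomp Require Import lra zify.
Import Order.TTheory GRing.Theory Num.Theory.
Import numFieldNormedType.Exports.
Local Open Scope classical_set_scope.
Local Open Scope ring_scope.
Set Implicit Arguments. Unset Strict Implicit.

(* Adjoin to M points e_0, e_1, ... at mutual distance 2 and at distance
   1 + d(x0, x) from each x in M.  Riesz' lemma gives unit vectors h_n and
   finite-dimensional subspaces H_n containing h_0, ..., h_(n-1) with
   dist(h_n, H_n) >= 1/2.  The map f vanishing on M with
   f(e_n) = (1 - 1/(n+2)) h_n has norm at least 1 - 1/(n+2) for every n, while
   a difference quotient whose largest index is N has norm at most
   1 - 1/(N+2); so quotients converging to a vector of norm ||f|| involve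
   arbitrarily large indices.  A quotient with largest index n is c h_n + w
   with w in H_n and ||c h_n + w|| <= 4|c|, hence it stays at distance
   |c|/2 from every quotient with smaller indices: such quotients cannot
   converge. *)

Lemma eventually_natSinv_lt (R : realType) (e : R) : 0 < e ->
  exists N, forall n, (N <= n)%N -> n.+1%:R^-1 < e.
Proof. by move=> e0; have [N _ HN] := near_infty_natSinv_lt (PosNum e0); exists N. Qed.

Lemma real_cauchy_cvg (R : realType) (t : nat -> R) :
  (forall e, 0 < e -> exists N, forall m n, (N <= m)%N -> (N <= n)%N -> `|t m - t n| < e) ->
  exists l, forall e, 0 < e -> exists N, forall n, (N <= n)%N -> `|l - t n| < e.
Proof.
move=> t_cauchy.
have /cvgrPdist_lt t_cvg : cvg (t @ \oo).
  apply/cauchy_cvgP/cauchy_exP => e e0.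
  by have [N HN] := t_cauchy e e0; exists (t N), N => // n; apply: HN.
by exists (lim (t @ \oo)) => e /t_cvg [N _ HN]; exists N.
Qed.

Section SeqSpan.
Variables (R : realType) (Y : normedModType R).
Implicit Types (s : seq Y) (v w y : Y).

Definition seq_span s : set Y :=
  [set y | exists c : nat -> R, y = \sum_(i < size s) c i *: s`_i].

Lemma seq_span0 s : seq_span s 0.
Proof. by exists (fun=> 0); rewrite big1 // => i _; rewrite scale0r. Qed.

Lemma seq_spanD s v w : seq_span s v -> seq_span s w -> seq_span s (v + w).
Proof.
move=> [c1 ->] [c2 ->]; exists (fun i => c1 i + c2 i).
by rewrite -big_split; apply: eq_bigr => i _; rewrite scalerDl.
Qed.

Lemma seq_spanZ s k v : seq_span s v -> seq_span s (k *: v).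
Proof.
move=> [c ->]; exists (fun i => k * c i).
by rewrite scaler_sumr; apply: eq_bigr => i _; rewrite scalerA.
Qed.

Lemma seq_spanB s v w : seq_span s v -> seq_span s w -> seq_span s (v - w).
Proof. by move=> sv sw; rewrite -scaleN1r; apply/seq_spanD/seq_spanZ. Qed.

Lemma seq_span_nil y : seq_span [::] y -> y = 0.
Proof. by move=> [c ->]; rewrite big_ord0. Qed.

Lemma seq_span_rcons s v y :
  seq_span (rcons s v) y <-> exists w t, seq_span s w /\ y = w + t *: v.
Proof.
have sum_rcons (c : nat -> R) : \sum_(i < size (rcons s v)) c i *: (rcons s v)`_i =
    \sum_(i < size s) c i *: s`_i + c (size s) *: v.
  rewrite size_rcons big_ord_recr /= nth_rcons ltnn eqxx; congr (_ + _).
  by apply: eq_bigr => i _; rewrite nth_rcons ltn_ord.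
split=> [[c ->]|[w [t [[c ->] ->]]]].
  exists (\sum_(i < size s) c i *: s`_i), (c (size s)).
  by rewrite (sum_rcons c); split=> //; exists c.
pose c' i := if (i < size s)%N then c i else t.
exists c'; rewrite (sum_rcons c') /c' ltnn.
by congr (_ + _); apply: eq_bigr => i _; rewrite ltn_ord.
Qed.

Lemma seq_span_rcons_sub s v y : seq_span s y -> seq_span (rcons s v) y.
Proof. by move=> sy; apply/seq_span_rcons; exists y, 0; rewrite scale0r addr0. Qed.

Lemma seq_span_rcons_last s v : seq_span (rcons s v) v.
Proof.
by apply/seq_span_rcons; exists 0, 1; rewrite scale1r add0r; split=> //; apply: seq_span0.
Qed.

Lemma norm_add_scale_ge s v del w t :
  (forall g, seq_span s g -> del <= `|v - g|) -> seq_span s w ->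
  `|t| * del <= `|w + t *: v|.
Proof.
move=> v_far sw; have [->|t0] := eqVneq t 0; first by rewrite normr0 mul0r.
have -> : w + t *: v = t *: (v - (- t^-1 *: w)).
  by rewrite scaleNr opprK scalerDr scalerA mulfV // scale1r addrC.
by rewrite normrZ ler_wpM2l //; apply/v_far/seq_spanZ.
Qed.

Lemma coef_dist_le s v del y w1 w2 t1 t2 :
  (forall g, seq_span s g -> del <= `|v - g|) -> seq_span s w1 -> seq_span s w2 ->
  `|t1 - t2| * del <= `|y - (w1 + t1 *: v)| + `|y - (w2 + t2 *: v)|.
Proof.
move=> v_far sw1 sw2; apply: le_trans (ler_normB _ _).
have -> : y - (w1 + t1 *: v) - (y - (w2 + t2 *: v)) = (w2 - w1) + (t2 - t1) *: v.
  by rewrite scalerBl opprB addrC addrA subrK opprD addrACA.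
by rewrite distrC; apply: norm_add_scale_ge (seq_spanB sw2 sw1).
Qed.

Definition metric_closed (A : set Y) :=
  forall y, (forall e, 0 < e -> exists g, A g /\ `|y - g| < e) -> A y.

Lemma dist_seq_span_gt0 s v : metric_closed (seq_span s) -> ~ seq_span s v ->
  exists del, 0 < del /\ forall g, seq_span s g -> del <= `|v - g|.
Proof.
move=> s_closed nsv; apply: contrapT => no_del; apply/nsv/s_closed => e e0.
apply: contrapT => no_g; apply: no_del; exists e; split=> // g sg.
by rewrite leNgt; apply/negP => vg; apply: no_g; exists g.
Qed.

Lemma metric_closed_seq_span_rcons s v :
  metric_closed (seq_span s) -> metric_closed (seq_span (rcons s v)).
Proof.
move=> s_closed y y_approx.
have [sv|nsv] := pselect (seq_span s v).
  apply/seq_span_rcons_sub/s_closed => e e0.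
  have [g [/seq_span_rcons [w [t [sw ->]]] yg]] := y_approx e e0.
  by exists (w + t *: v); split=> //; apply/seq_spanD/seq_spanZ.
have [del [del0 v_far]] := dist_seq_span_gt0 s_closed nsv.
have /choice [wt wt_approx] : forall n : nat, exists p : Y * R,
    seq_span s p.1 /\ `|y - (p.1 + p.2 *: v)| < n.+1%:R^-1.
  move=> n; have [|g [/seq_span_rcons [w [t [sw ->]]] yg]] := y_approx n.+1%:R^-1.
    by rewrite invr_gt0.
  by exists (w, t).
pose w n := (wt n).1; pose t n := (wt n).2.
have t_cauchy e : 0 < e ->
    exists N, forall m n, (N <= m)%N -> (N <= n)%N -> `|t m - t n| < e.
  move=> e0; have ed0 : 0 < e * del / 2 by rewrite divr_gt0 ?mulr_gt0.
  have [N HN] := eventually_natSinv_lt ed0.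
  exists N => m n Nm Nn; rewrite -(ltr_pM2r del0).
  apply: le_lt_trans (coef_dist_le y (t m) (t n) v_far (wt_approx m).1 (wt_approx n).1) _.
  rewrite [e * del]splitr.
  exact: ltrD (lt_trans (wt_approx m).2 (HN m Nm)) (lt_trans (wt_approx n).2 (HN n Nn)).
have [tl tl_lim] := real_cauchy_cvg t_cauchy.
apply/seq_span_rcons; exists (y - tl *: v), tl; split; last by rewrite subrK.
apply: s_closed => e e0; have e20 : 0 < e / 2 by rewrite divr_gt0.
have [N1 HN1] := eventually_natSinv_lt e20.
have v10 : 0 < `|v| + 1 by rewrite ltr_wpDl.
have [N2 HN2] := tl_lim _ (divr_gt0 e20 v10).
pose n := maxn N1 N2; exists (w n); split; first exact: (wt_approx n).1.
have -> : y - tl *: v - w n = (y - (w n + t n *: v)) + (t n - tl) *: v.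
  by rewrite scalerBl opprD !addrA subrK addrAC.
apply: le_lt_trans (ler_normD _ _) _; rewrite [e]splitr; apply: ltrD.
  exact: lt_trans (wt_approx n).2 (HN1 _ (leq_maxl _ _)).
have := HN2 _ (leq_maxr N1 N2); rewrite ltr_pdivlMr // normrZ distrC.
by apply: le_lt_trans; rewrite ler_wpM2l // lerDl.
Qed.

Lemma metric_closed_seq_span s : metric_closed (seq_span s).
Proof.
elim/last_ind: s => [|s v IH]; last exact: metric_closed_seq_span_rcons.
move=> y y_approx; have [->|y0] := eqVneq y 0; first exact: seq_span0.
have [|g [/seq_span_nil ->]] := y_approx `|y|; first by rewrite normr_gt0.
by rewrite subr0 ltxx.
Qed.

Lemma riesz_lemma s y : ~ seq_span s y ->
  exists e : Y, `|e| = 1 /\ forall g, seq_span s g -> 1/2 <= `|e - g|.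
Proof.
move=> nsy.
have [del [del0 y_far]] := dist_seq_span_gt0 (metric_closed_seq_span (s:=s)) nsy.
pose A := [set r : R | forall g, seq_span s g -> r <= `|y - g|].
have A_ub : has_ubound A by exists `|y - 0| => r Ar; apply/Ar/seq_span0.
have sA0 : 0 < sup A by apply: lt_le_trans del0 (ub_le_sup A_ub y_far).
have sA_le g : seq_span s g -> sup A <= `|y - g|.
  by move=> sg; apply: ge_sup; [exists del | move=> r Ar; apply: Ar].
have [w [sw yw]] : exists w, seq_span s w /\ `|y - w| < 2 * sup A.
  apply: contrapT => no_w.
  have A2 : A (2 * sup A).
    move=> g sg; rewrite leNgt; apply/negP => yg; apply: no_w; by exists g.
  by have := ub_le_sup A_ub A2; lra.
pose r := `|y - w|; have r0 : 0 < r by apply: lt_le_trans sA0 (sA_le _ sw).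
exists (r^-1 *: (y - w)); split.
  by rewrite normrZ normfV normr_id mulVf // gt_eqF.
move=> g sg; have -> : r^-1 *: (y - w) - g = r^-1 *: (y - (w + r *: g)).
  by rewrite opprD addrA [in RHS]scalerDr scalerN scalerA mulVf ?gt_eqF // scale1r.
rewrite normrZ normfV (ger0_norm (ltW r0)) ler_pdivlMl //.
apply: le_trans (sA_le _ (seq_spanD sw (seq_spanZ r sg))); rewrite -/r in yw; lra.
Qed.

End SeqSpan.

Lemma riesz_sequence (R : realType) (Y : normedModType R) : infinite_dimensional Y ->
  exists (h : nat -> Y) (H : nat -> seq Y),
    [/\ forall n, H n.+1 = rcons (H n) (h n),
        forall n, `|h n| = 1 &
        forall n g, seq_span (H n) g -> 1/2 <= `|h n - g|].
Proof.
move=> Y_infdim.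
have /choice [e e_far] : forall s : seq Y, exists e : Y,
    `|e| = 1 /\ forall g, seq_span s g -> 1/2 <= `|e - g|.
  by move=> s; have [y ny] := Y_infdim s; apply: riesz_lemma => -[c]; apply: ny.
pose fix H n := if n is n'.+1 then rcons (H n') (e (H n')) else [::].
by exists (fun n => e (H n)), H; split=> // n; have [] := e_far (H n).
Qed.

Section OnePointPerInteger.
Variables (R : realType) (T : Type) (d : T -> T -> R) (x0 : T).
Hypothesis d_metric : is_metric d.

Definition ext_dist (p q : T + nat) : R :=
  match p, q with
  | inl x, inl y => d x y
  | inl x, inr _ => 1 + d x0 x
  | inr _, inl y => 1 + d x0 y
  | inr n, inr m => if n == m then 0 else 2
  end.

Lemma ext_dist_metric : is_metric ext_dist.
Proof.
have [d_ge0 [d_eq0 [d_sym d_tri]]] := d_metric.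
split; first by case=> [x|n] [y|m] /=; rewrite ?addr_ge0 //; case: eqP.
split.
  case=> [x|n] [y|m] /=.
  - by split=> [/d_eq0 -> | [/d_eq0]].
  - by split=> [ext0|//]; exfalso; have := d_ge0 x0 x; lra.
  - by split=> [ext0|//]; exfalso; have := d_ge0 x0 y; lra.
  - case: eqVneq => [-> //|nm]; split=> [two0|[mn]]; first by exfalso; lra.
    by rewrite mn eqxx in nm.
split; first by case=> [x|n] [y|m] //=; rewrite eq_sym.
case=> [x|n] [y|m] [z|k] /=.
- exact: d_tri.
- by have := d_tri x0 y x; rewrite (d_sym y x); lra.
- have := d_tri x x0 z; rewrite (d_sym x x0).
  by have := d_ge0 x0 x; have := d_ge0 x0 z; lra.
- by case: eqP => _; have := d_ge0 x0 x; lra.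
- by have := d_tri x0 y z; lra.
- by case: eqP => _; have := d_ge0 x0 y; lra.
- by case: eqP => _; have := d_ge0 x0 z; lra.
- case: (eqVneq n k) => [->|nk]; first by case: eqP; case: eqP => //; lra.
  case: (eqVneq n m) => [<-|nm]; first by rewrite (negbTE nk); lra.
  by case: eqP => _; lra.
Qed.

Lemma ext_dist_complete : complete_metric d -> complete_metric ext_dist.
Proof.
have [d_ge0 _] := d_metric.
move=> d_complete u u_cauchy; have [N HN] := u_cauchy 1 ltr01.
case uN: (u N) => [x|k].
- have u_inl n : exists y, u (n + N)%N = inl y.
    have := HN N (n + N)%N (leqnn N) (leq_addl _ _); rewrite uN.
    case: (u _) => [y|m] /= lt1; first by exists y.
    by exfalso; have := d_ge0 x0 x; lra.
  have /choice [v v_def] := u_inl.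
  have [|z v_lim] := d_complete v.
    move=> e e0; have [M HM] := u_cauchy e e0; exists M => m n Mm Mn.
    by have := HM (m + N)%N (n + N)%N ltac:(lia) ltac:(lia); rewrite !v_def.
  exists (inl z) => e /v_lim [M HM]; exists (M + N)%N => n MNn.
  by rewrite -(subnK (leq_trans (leq_addl M N) MNn)) v_def; apply: HM; lia.
- have u_const n : (N <= n)%N -> u n = inr k.
    move=> Nn; have := HN N n (leqnn N) Nn; rewrite uN.
    case: (u n) => [y|m] /= lt1; first by exfalso; have := d_ge0 x0 y; lra.
    by move: lt1; case: eqP => [-> //|_]; rewrite ltNge ler1n.
  by exists (inr k) => e e0; exists N => n Nn; rewrite u_const //= eqxx.
Qed.

End OnePointPerInteger.

Definition weight (R : realType) (n : nat) : R := 1 - n.+2%:R^-1.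

Section Weight.
Variable R : realType.
Local Notation weight := (@weight R).

Lemma weight_lt m n : (weight m < weight n) = (m < n)%N.
Proof. by rewrite /weight ltrD2l ltrN2 ltf_pV2 ?posrE ?ltr0Sn // ltr_nat !ltnS. Qed.

Lemma weight_le m n : (weight m <= weight n) = (m <= n)%N.
Proof. by rewrite /weight lerD2l lerN2 lef_pV2 ?posrE ?ltr0Sn // ler_nat !ltnS. Qed.

Lemma weight_ge_half n : 1/2 <= weight n.
Proof.
rewrite /weight; set x := n.+2%:R^-1.
have : x <= 2^-1 by rewrite lef_pV2 ?posrE ?ltr0Sn // ler_nat.
lra.
Qed.

Lemma weight_lt1 n : weight n < 1.
Proof. by rewrite /weight ltrBlDl ltrDr invr_gt0 ltr0Sn. Qed.

Lemma weight_ge0 n : 0 <= weight n.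
Proof. by apply: le_trans (weight_ge_half n); rewrite divr_ge0. Qed.

End Weight.

Section NonAttainingMap.
Variables (R : realType) (T : Type) (d : T -> T -> R) (x0 : T).
Hypothesis d_metric : is_metric d.
Variables (Y : normedModType R) (h : nat -> Y) (H : nat -> seq Y).
Hypotheses (H_rcons : forall n, H n.+1 = rcons (H n) (h n))
  (h_unit : forall n, `|h n| = 1)
  (h_far : forall n g, seq_span (H n) g -> 1/2 <= `|h n - g|).

Local Notation D := (ext_dist d x0).

Definition riesz_map (p : T + nat) : Y :=
  if p is inr n then weight R n *: h n else 0.

Definition level (p : T + nat) : nat := if p is inr n then n else 0.

Definition pair_level (p q : T + nat) : nat := maxn (level p) (level q).

Definition diff_quot (p q : T + nat) : Y := (D p q)^-1 *: (riesz_map p - riesz_map q).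

Lemma seq_span_mono m n g : (m <= n)%N -> seq_span (H m) g -> seq_span (H n) g.
Proof.
elim: n => [|n IH]; first by rewrite leqn0 => /eqP ->.
rewrite leq_eqVlt => /predU1P [-> //|mn] sg.
by rewrite H_rcons; apply/seq_span_rcons_sub/IH.
Qed.

Lemma h_in_next_span m n : (m < n)%N -> seq_span (H n) (h m).
Proof.
by move=> mn; apply: seq_span_mono mn _; rewrite H_rcons; apply: seq_span_rcons_last.
Qed.

Lemma ext_dist_gt0 p q : p <> q -> 0 < D p q.
Proof.
have [D_ge0 [D_eq0 _]] := ext_dist_metric x0 d_metric.
by move=> pq; rewrite lt_def D_ge0 andbT; apply/eqP => /D_eq0.
Qed.

Lemma norm_weighted n : `|weight R n *: h n| = weight R n.
Proof. by rewrite normrZ h_unit mulr1 ger0_norm // weight_ge0. Qed.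

Lemma norm_diff_quot p q : p <> q ->
  `|diff_quot p q| = `|riesz_map p - riesz_map q| / D p q.
Proof.
by move=> pq; rewrite normrZ normfV (ger0_norm (ltW (ext_dist_gt0 pq))) mulrC.
Qed.

Lemma ratio_le_weight p q : p <> q ->
  `|riesz_map p - riesz_map q| / D p q <= weight R (pair_level p q).
Proof.
have d_ge0 := d_metric.1.
have div_1D a x : 0 <= a -> a / (1 + d x0 x) <= a.
  have D_ge1 : 1 <= 1 + d x0 x by rewrite lerDl.
  by move=> a0; rewrite ler_pdivrMr ?(lt_le_trans ltr01 D_ge1) // ler_peMr.
rewrite /pair_level; case: p => [x|n]; case: q => [y|m] pq /=.
- by rewrite subrr normr0 mul0r weight_ge0.
- by rewrite max0n sub0r normrN norm_weighted div_1D ?weight_ge0.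
- by rewrite maxn0 subr0 norm_weighted div_1D ?weight_ge0.
- have nm : n != m by apply: contraPneq pq => ->.
  rewrite (negbTE nm) ler_pdivrMr //; apply: le_trans (ler_normB _ _) _.
  have := weight_le R n (maxn n m); have := weight_le R m (maxn n m).
  by rewrite !norm_weighted leq_maxl leq_maxr; lra.
Qed.

Lemma diff_quot_decomp p q : p <> q -> exists (c : R) (w : Y),
  [/\ seq_span (H (pair_level p q)) w,
      diff_quot p q = c *: h (pair_level p q) + w &
      `|diff_quot p q| <= 4 * `|c|].
Proof.
rewrite /diff_quot /pair_level; case: p => [x|n]; case: q => [y|m] pq /=.
- exists 0, 0; rewrite subrr scaler0 scale0r addr0 !normr0 mulr0.
  by split=> //; apply: seq_span0.
- exists (- ((1 + d x0 x)^-1 * weight R m)), 0; rewrite max0n addr0 sub0r scalerN.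
  split; [exact: seq_span0 | by rewrite scalerA scaleNr |].
  rewrite !normrN scalerA normrZ h_unit mulr1.
  by have := normr_ge0 ((1 + d x0 x)^-1 * weight R m); lra.
- exists ((1 + d x0 y)^-1 * weight R n), 0; rewrite maxn0 addr0 subr0 scalerA.
  split; [exact: seq_span0 | by [] |].
  rewrite normrZ h_unit mulr1.
  by have := normr_ge0 ((1 + d x0 y)^-1 * weight R n); lra.
- have nm : n != m by apply: contraPneq pq => ->.
  have Q_le1 : `|2^-1 *: (weight R n *: h n - weight R m *: h m)| <= 1.
    rewrite normrZ ger0_norm // ler_pdivrMl //; apply: le_trans (ler_normB _ _) _.
    by rewrite !norm_weighted; have := weight_lt1 R n; have := weight_lt1 R m; lra.
  have c_ge (a : R) : 1/2 <= a -> 1 <= 4 * `|2^-1 * a|.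
    by move=> a_ge; rewrite ger0_norm; lra.
  rewrite (negbTE nm); case: (ltngtP n m) => [lt|gt|eq]; last by rewrite eq eqxx in nm.
  + exists (- (2^-1 * weight R m)), ((2^-1 * weight R n) *: h n); split.
    * exact/seq_spanZ/h_in_next_span.
    * by rewrite scalerBr !scalerA scaleNr addrC.
    * by rewrite normrN; apply: le_trans Q_le1 (c_ge _ (weight_ge_half R m)).
  + exists (2^-1 * weight R n), ((- (2^-1 * weight R m)) *: h m); split.
    * exact/seq_spanZ/h_in_next_span.
    * by rewrite scalerBr !scalerA scaleNr.
    * by apply: le_trans Q_le1 (c_ge _ (weight_ge_half R n)).
Qed.

Lemma riesz_map_lip_ub : has_ubound (lip_ratios D riesz_map).
Proof.
exists 1 => _ [p [q [pq ->]]].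
exact: le_trans (ratio_le_weight pq) (ltW (weight_lt1 _ _)).
Qed.

Lemma riesz_map_Lip0 : Lip0 D (inl x0) riesz_map.
Proof. by split=> //; apply: riesz_map_lip_ub. Qed.

Lemma weight_le_lipnorm n : weight R n <= lipnorm D riesz_map.
Proof.
apply: (ub_le_sup riesz_map_lip_ub); exists (inr n), (inl x0); split=> //=.
have [_ [d_eq0 _]] := d_metric.
by rewrite (proj2 (d_eq0 x0 x0) erefl) addr0 divr1 subr0 norm_weighted.
Qed.

Lemma diff_quot_level_unbounded (p q : nat -> T + nat) y :
  (forall k, p k <> q k) -> (fun k => diff_quot (p k) (q k)) @ \oo --> y ->
  `|y| = lipnorm D riesz_map ->
  forall N, exists K, forall k, (K <= k)%N -> (N < pair_level (p k) (q k))%N.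
Proof.
move=> pq /cvgrPdist_lt Q_lim y_norm N.
have /Q_lim [K _ HK] : 0 < `|y| - weight R N.
  by rewrite subr_gt0 y_norm (lt_le_trans _ (weight_le_lipnorm N.+1)) // weight_lt.
exists K => k Kk; rewrite -(weight_lt R); apply: lt_le_trans (ratio_le_weight (pq k)).
rewrite -norm_diff_quot //; have := HK k Kk; have := lerB_dist y (diff_quot (p k) (q k)).
lra.
Qed.

Lemma riesz_map_not_attaining y : ~ attains_norm_toward D riesz_map y.
Proof.
move=> [p [q [pq [Q_lim y_norm]]]]; pose Q k := diff_quot (p k) (q k).
have y_ge : 1/2 <= `|y|.
  by rewrite y_norm; apply: le_trans (weight_ge_half R 0) (weight_le_lipnorm 0).
have [K1 _ HK1] : \forall k \near \oo, `|y - Q k| < 1/64.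
  by move: (Q_lim) => /cvgrPdist_lt; apply; lra.
pose N := pair_level (p K1) (q K1).
have [K2 HK2] := diff_quot_level_unbounded pq Q_lim y_norm N.
pose k := maxn K1 K2; pose n := pair_level (p k) (q k).
have Nn : (N < n)%N := HK2 k (leq_maxr _ _).
have [c [w [sw Qk_eq Qk_le]]] := diff_quot_decomp (pq k).
have [c' [w' [sw' QK1_eq _]]] := diff_quot_decomp (pq K1).
have QK1_span : seq_span (H n) (Q K1).
  rewrite /Q QK1_eq; apply: seq_spanD; first exact/seq_spanZ/h_in_next_span.
  exact: seq_span_mono (ltnW Nn) sw'.
have lower : `|c| * (1/2) <= `|Q k - Q K1|.
  have -> : Q k - Q K1 = (w - Q K1) + c *: h n.
    by rewrite /Q Qk_eq [c *: _ + _]addrC addrAC.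
  exact: norm_add_scale_ge (@h_far n) (seq_spanB sw QK1_span).
have upper : `|Q k - Q K1| < 1/64 + 1/64.
  have -> : Q k - Q K1 = (y - Q K1) - (y - Q k).
    by rewrite [in RHS]opprB [in RHS]addrC [in RHS]addrA subrK.
  apply: le_lt_trans (ler_normB _ _) _.
  by apply: ltrD; apply: HK1; [exact: leqnn | exact: leq_maxl].
have Qk_ge : `|y| - 1/64 < `|Q k|.
  by have := lerB_dist y (Q k); have := HK1 k (leq_maxl _ _); lra.
(* lower and upper give |c| < 1/16, so ||Q k|| <= 4|c| < 1/4 < ||y|| - 1/64. *)
lra.
Qed.

End NonAttainingMap.

Theorem corollary2p9 (R : realType) (T : Type) (d : T -> T -> R) (x0 : T)
  (Y : completeNormedModType R)
  (hd : is_metric d) (hc : complete_metric d) (hY : infinite_dimensional Y) :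
  exists (T' : Type) (d' : T' -> T' -> R) (x0' : T') (j : T -> T'),
    is_metric d' /\ complete_metric d' /\
    @NA R T' d' x0' Y `<` @Lip0 R T' d' x0' Y /\
    countable (~` range j) /\
    (forall x y, d' (j x) (j y) = d x y) /\ j x0 = x0'.
Proof.
have [h [H [H_rcons h_unit h_far]]] := riesz_sequence hY.
exists (T + nat)%type, (ext_dist d x0), (inl x0), inl.
split; first exact: ext_dist_metric.
split; first exact: ext_dist_complete.
split.
  split=> [f [] //|Lip0_sub_NA].
  have [_ [y]] := Lip0_sub_NA _ (riesz_map_Lip0 x0 hd h_unit).
  exact: (riesz_map_not_attaining hd H_rcons h_unit h_far).
split=> //; apply: (card_le_trans (subset_card_le _) (card_image_le inr setT)).
by case=> [x /(_ (ex_intro2 _ _ x I erefl))|n _] //; exists n.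
Qed.
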